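(* Let $p,q$ be distinct primes and $n\geqslant1$. Then the complexity of $C_{p^nq}$ is $3k+1$ if $n=2k$, and $3k+2$ if $n=2k+1$.
   Context: For a finite group $G$, an arrow is a pair $(H,K)$ of subgroups with $H\leqslant K$; identity arrows are those with $H=K$. A $G$-transfer system is a set of arrows containing all identities and closed under composition ($(H,K),(K,L)\Rightarrow(H,L)$), conjugation ($(H,K)\Rightarrow(gHg^{-1},gKg^{-1})$) and restriction ($(H,K)$ and $L\leqslant K\Rightarrow(H\cap L,L)$). For a set $S$ of non-identity arrows, $\langle S\rangle$ is the smallest transfer system containing $S$. A minimal generating set of a transfer system $\mathsf{T}$ is a set $S\subseteq\mathsf{T}$ of non-identity arrows with $\langle S\rangle=\mathsf{T}$ and $\langle S\setminus\{s\}\rangle\neq\mathsf{T}$ for all $s\in S$; all such have the same cardinality $\mathfrak{m}(\mathsf{T})$. The complexity $\mathfrak{c}(G)$ is the maximum of $\mathfrak{m}(\mathsf{T})$ over all $G$-transfer systems $\mathsf{T}$. *)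

From mathcomp Require Import all_boot all_fingroup.
Set Implicit Arguments. Unset Strict Implicit. Unset Printing Implicit Defensive.
Local Open Scope group_scope.

Section TransferSystems.
Variable gT : finGroupType.

Definition arrowT := ({set gT} * {set gT})%type.

Definition is_subgroup (G H : {set gT}) : bool := group_set H && (H \subset G).

Definition is_arrow (G : {set gT}) (a : arrowT) : bool :=
  [&& is_subgroup G a.1, is_subgroup G a.2 & a.1 \subset a.2].

Definition is_identity_arrow (a : arrowT) : bool := a.1 == a.2.

Definition is_transfer_system (G : {set gT}) (T : {set arrowT}) : bool :=
  [&& [forall a in T, is_arrow G a],
      [forall H : {set gT}, is_subgroup G H ==> ((H, H) \in T)],
      [forall a in T, forall b in T, (a.2 == b.1) ==> ((a.1, b.2) \in T)],
      [forall a in T, forall g in G, (a.1 :^ g, a.2 :^ g) \in T] &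
      [forall a in T, forall L : {set gT},
          is_subgroup a.2 L ==> ((a.1 :&: L, L) \in T)]].

Definition gen_ts (G : {set gT}) (S : {set arrowT}) : {set arrowT} :=
  \bigcap_(T | is_transfer_system G T && (S \subset T)) T.

Definition minimal_generating (G : {set gT}) (S T : {set arrowT}) : bool :=
  [&& S \subset T, [forall a in S, ~~ is_identity_arrow a],
      gen_ts G S == T &
      [forall s in S, gen_ts G (S :\ s) != T]].

(* m(T): the cardinality of a minimal generating set of T (all such have
   the same cardinality; we take the maximum to get a total definition). *)
Definition mgen (G : {set gT}) (T : {set arrowT}) : nat :=
  \max_(S : {set arrowT} | minimal_generating G S T) #|S|.

Definition complexity (G : {set gT}) : nat :=
  \max_(T : {set arrowT} | is_transfer_system G T) mgen G T.

End TransferSystems.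

(* The subgroups of a cyclic group of order p^n q form the grid [0, n] x [0, 1],
   the pair (i, e) standing for the subgroup of order p^i q^e.  The group being
   abelian, conjugation acts trivially, so its transfer systems and their
   generation are those of this lattice, and the complexity is the largest size
   of an independent set S of arrows of the grid: no arrow of S lies in the
   transfer system generated by the others.

   In such an S the flat arrows, the arrows into the top row and the arrows out
   of the bottom row number at most n, n + 1 and n + 1.  In each case, label an
   arrow either by its source column or by how far its source reaches along the
   bottom row in the transfer system generated by the other arrows; independence
   makes the labels distinct and smaller than n, except for one rising arrow of
   maximal source.  Every arrow lies in exactly two of the three classes, hence
   2 |S| <= 3 n + 2.  For n = 2 k + o an explicit family of 3 k + 1 + o arrows,
   each separated from the others by a transfer system, attains the bound. *)

From mathcomp Require Import all_boot all_order all_fingroup all_solvable.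
From mathcomp Require Import zify.
Set Implicit Arguments. Unset Strict Implicit. Unset Printing Implicit Defensive.

(** * Transfer systems on a finite meet-semilattice *)

Section LatticeTransferSystems.
Import Order.Theory.
Context {disp : Order.disp_t} {L : finMeetSemilatticeType disp}.
Local Open Scope order_scope.
Implicit Types (u v w z : L) (a s : L * L) (R B S : {set L * L}).

Definition lattice_arrows : {set L * L} := [set a | a.1 <= a.2].

Definition lattice_ts B : bool :=
  [&& B \subset lattice_arrows, [forall u, (u, u) \in B],
      [forall u, forall v, forall w, ((u, v) \in B) && ((v, w) \in B) ==> ((u, w) \in B)] &
      [forall u, forall v, forall z, ((u, v) \in B) && (z <= v) ==> ((u `&` z, z) \in B)]].

Record lattice_ts_spec B : Prop := LatticeTS {
  ts_le u v : (u, v) \in B -> u <= v;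
  ts_refl u : (u, u) \in B;
  ts_trans u v w : (u, v) \in B -> (v, w) \in B -> (u, w) \in B;
  ts_restr u v z : (u, v) \in B -> z <= v -> (u `&` z, z) \in B }.

Lemma lattice_tsP B : reflect (lattice_ts_spec B) (lattice_ts B).
Proof.
apply: (iffP and4P) => [[/subsetP sB /forallP refl /forallP trans /forallP restr]|tB].
  split=> // [u v /sB|u v w uv vw|u v z uv zv]; first by rewrite inE.
    by have /forallP/(_ v)/forallP/(_ w) := trans u; rewrite uv vw.
  by have /forallP/(_ v)/forallP/(_ z) := restr u; rewrite uv zv.
split; first by apply/subsetP=> -[u v] /(ts_le tB); rewrite inE.
- by apply/forallP=> u; apply: ts_refl.
- do 3!apply/forallP => ?; apply/implyP=> /andP[]; exact: ts_trans.
- do 3!apply/forallP => ?; apply/implyP=> /andP[]; exact: ts_restr.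
Qed.

Lemma ts_down B u v w : lattice_ts_spec B ->
  (u, v) \in B -> u <= w -> w <= v -> (u, w) \in B.
Proof. by move=> tB uv uw wv; have := ts_restr tB uv wv; rewrite meet_l. Qed.

Lemma lattice_ts_arrows : lattice_ts_spec lattice_arrows.
Proof.
split=> [u v|u|u v w|u v z]; rewrite ?inE //=; first exact: le_trans.
by rewrite leIr.
Qed.

Definition ts_closure R : {set L * L} :=
  \bigcap_(B | lattice_ts B && (R \subset B)) B.

Lemma ts_closureP R a :
  reflect (forall B, lattice_ts_spec B -> R \subset B -> a \in B) (a \in ts_closure R).
Proof.
apply: (iffP bigcapP) => [inB B /lattice_tsP tB sRB|inB B /andP[/lattice_tsP]].
  by apply: inB; rewrite tB.
exact: inB.
Qed.

Lemma sub_ts_closure R : R \subset ts_closure R.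
Proof. by apply/subsetP=> a aR; apply/ts_closureP=> B _ /subsetP; apply. Qed.

Lemma ts_closure_min R B : lattice_ts_spec B -> R \subset B -> ts_closure R \subset B.
Proof. by move=> tB sRB; apply/subsetP=> a /ts_closureP; apply. Qed.

Lemma ts_closureS R1 R2 : R1 \subset R2 -> ts_closure R1 \subset ts_closure R2.
Proof.
move=> sR12; apply/subsetP=> a /ts_closureP inB; apply/ts_closureP=> B tB sR2B.
exact: inB tB (subset_trans sR12 sR2B).
Qed.

Lemma ts_closure_spec R : R \subset lattice_arrows -> lattice_ts_spec (ts_closure R).
Proof.
move=> sRA; split=> [u v|u|u v w|u v z].
- by move=> /ts_closureP/(_ _ lattice_ts_arrows sRA); rewrite inE.
- by apply/ts_closureP=> B tB _; apply: ts_refl.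
- move=> /ts_closureP uv /ts_closureP vw; apply/ts_closureP=> B tB sRB.
  exact: (ts_trans tB (uv _ tB sRB) (vw _ tB sRB)).
- move=> /ts_closureP uv zv; apply/ts_closureP=> B tB sRB.
  exact: (ts_restr tB (uv _ tB sRB) zv).
Qed.

Lemma ts_closureD1 R s : R :\ s \subset lattice_arrows ->
  s \in ts_closure (R :\ s) -> ts_closure (R :\ s) = ts_closure R.
Proof.
move=> sRA sC; apply/eqP; rewrite eqEsubset ts_closureS ?subsetDl //=.
apply: ts_closure_min; first exact: ts_closure_spec.
apply/subsetP=> t tR; have [-> // | ts] := eqVneq t s.
by apply: (subsetP (sub_ts_closure _)); rewrite !inE ts.
Qed.

Definition independent S : bool :=
  [forall s in S, (s.1 <= s.2) && (s \notin ts_closure (S :\ s))].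

Section Independent.
Variable S : {set L * L}.
Hypothesis indS : independent S.

Lemma independent_arrows : S \subset lattice_arrows.
Proof. by apply/subsetP=> s /(forall_inP indS)/andP[]; rewrite inE. Qed.

Lemma independent_notin s : s \in S -> s \notin ts_closure (S :\ s).
Proof. by move/(forall_inP indS)/andP=> []. Qed.

Lemma ts_closureD1_spec s : lattice_ts_spec (ts_closure (S :\ s)).
Proof. by apply/ts_closure_spec/subset_trans/independent_arrows; apply: subsetDl. Qed.

Lemma mem_ts_closureD1 s t : t \in S -> t != s -> t \in ts_closure (S :\ s).
Proof. by move=> tS ts; apply: (subsetP (sub_ts_closure _)); rewrite !inE ts. Qed.

Lemma independent_neq s : s \in S -> s.1 != s.2.
Proof.
move=> sS; apply: contraNneq (independent_notin sS) => s12.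
by rewrite [s]surjective_pairing s12 (ts_refl (ts_closureD1_spec _)).
Qed.

Lemma independent_same_source s t : s \in S -> t \in S -> s != t ->
  s.1 = t.1 -> ~~ (s.2 <= t.2).
Proof.
move=> sS tS st s1t1; apply: contraNN (independent_notin sS) => s2t2.
have tC : (t.1, t.2) \in ts_closure (S :\ s).
  by rewrite -surjective_pairing mem_ts_closureD1 // eq_sym.
have s12 : s.1 <= s.2 by have := subsetP independent_arrows _ sS; rewrite inE.
by have := ts_restr (ts_closureD1_spec s) tC s2t2; rewrite -s1t1 meet_l // -surjective_pairing.
Qed.

End Independent.

Lemma independent_separated S : {in S, forall s, s.1 <= s.2} ->
  (forall s, s \in S -> exists2 B, lattice_ts_spec B & (S :\ s \subset B) && (s \notin B)) ->
  independent S.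
Proof.
move=> S_arr sep; apply/forall_inP=> s sS; rewrite S_arr //=.
have [B tsB /andP[sSB sB]] := sep s sS.
by apply: contra sB; apply/subsetP/ts_closure_min.
Qed.

Lemma independentS S1 S2 : S1 \subset S2 -> independent S2 -> independent S1.
Proof.
move=> sS12 /forall_inP indS2; apply/forall_inP=> s sS1.
have /andP[-> notC] := indS2 s (subsetP sS12 _ sS1); apply: contra notC.
by apply/subsetP/ts_closureS/setSD.
Qed.

End LatticeTransferSystems.

(** * Transfer systems of an abelian group *)

Section SubgroupLattice.
Import Order.Theory.
Local Open Scope group_scope.
Context {disp : Order.disp_t} {L : finMeetSemilatticeType disp}.
Context {gT : finGroupType} (G : {group gT}) (phi : L -> {set gT}).
Hypotheses (abelG : abelian G) (phi_group : forall u, group_set (phi u))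
  (phi_sub : forall u, phi u \subset G)
  (phi_leE : forall u v, (phi u \subset phi v) = (u <= v)%O)
  (phi_onto : forall H, is_subgroup G H -> exists u, H = phi u).
Implicit Types (u v : L) (a : L * L) (R S : {set L * L}) (T : {set arrowT gT}).

Lemma phi_inj : injective phi.
Proof. by move=> u v phi_uv; apply/le_anti; rewrite -!phi_leE phi_uv subxx. Qed.

Lemma phiI u v : phi (u `&` v)%O = phi u :&: phi v.
Proof.
have [m phi_m] : exists m, phi u :&: phi v = phi m.
  apply: phi_onto.
  rewrite /is_subgroup (group_setI (Group (phi_group u)) (Group (phi_group v))).
  exact: subset_trans (subsetIl _ _) (phi_sub u).
have [mu mv] : (m <= u /\ m <= v)%O by rewrite -!phi_leE -phi_m subsetIl subsetIr.
rewrite phi_m; congr phi; apply/le_anti; rewrite lexI mu mv -phi_leE -phi_m.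
by rewrite subsetI !phi_leE leIl leIr.
Qed.

Lemma phi_conj u g : g \in G -> phi u :^ g = phi u.
Proof. by move=> Gg; apply/normP/(subsetP (sub_abelian_norm abelG (phi_sub u))). Qed.

Definition phi2 a : arrowT gT := (phi a.1, phi a.2).

Lemma phi2_inj : injective phi2.
Proof. by move=> [u v] [u' v'] [/phi_inj -> /phi_inj ->]. Qed.

Lemma is_arrow_phi2 a : is_arrow G (phi2 a) = (a.1 <= a.2)%O.
Proof. by rewrite /is_arrow /is_subgroup /= !phi_group !phi_sub phi_leE. Qed.

Lemma transfer_system_image B : lattice_ts_spec B -> is_transfer_system G (phi2 @: B).
Proof.
move=> tsB; apply/and5P; split.
- apply/forall_inP=> _ /imsetP[a aB ->].
  by rewrite is_arrow_phi2 (ts_le tsB) // -surjective_pairing.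
- apply/forallP=> H; apply/implyP=> /phi_onto[u ->].
  by apply/imsetP; exists (u, u); rewrite ?(ts_refl tsB).
- apply/forall_inP=> _ /imsetP[a aB ->]; apply/forall_inP=> _ /imsetP[b bB ->].
  apply/implyP=> /eqP /phi_inj ab; apply/imsetP; exists (a.1, b.2) => //.
  apply: (ts_trans tsB (v := a.2)); rewrite -?surjective_pairing //.
  by rewrite ab -surjective_pairing.
- apply/forall_inP=> _ /imsetP[a aB ->]; apply/forall_inP=> g Gg.
  by rewrite /= !phi_conj //; apply: imset_f.
- apply/forall_inP=> _ /imsetP[a aB ->]; apply/forallP=> H.
  apply/implyP=> /andP[gH sH].
  have [z def_H] : exists z, H = phi z.
    by apply: phi_onto; rewrite /is_subgroup gH (subset_trans sH (phi_sub _)).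
  rewrite def_H /= -phiI; apply/imsetP; exists (a.1 `&` z, z)%O => //.
  by apply: (ts_restr tsB (v := a.2)); rewrite -?phi_leE -?def_H -?surjective_pairing.
Qed.

Lemma lattice_ts_preimage T : is_transfer_system G T -> lattice_ts_spec (phi2 @^-1: T).
Proof.
case/and5P=> /forall_inP T_arr /forallP T_refl /forall_inP T_trans _ /forall_inP T_restr.
split=> [u v|u|u v w|u v z]; rewrite !inE.
- by move/T_arr; rewrite is_arrow_phi2.
- by apply: (implyP (T_refl (phi u))); rewrite /is_subgroup phi_group phi_sub.
- by move=> uv /(forall_inP (T_trans _ uv)); rewrite eqxx.
- move=> uv zv; have /forallP/(_ (phi z)) := T_restr _ uv.
  by rewrite /is_subgroup phi_group phi_leE zv /= -phiI.
Qed.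

Lemma image_preimage T : {subset T <= is_arrow G} -> phi2 @: (phi2 @^-1: T) = T.
Proof.
move=> T_arr; apply/setP=> x; apply/imsetP/idP=> [[a] | xT].
  by rewrite inE => aT ->.
case/and3P: (T_arr x xT) => /phi_onto[u def_x1] /phi_onto[v def_x2] _.
by exists (u, v); rewrite ?inE /phi2 /= -def_x1 -def_x2 -?surjective_pairing.
Qed.

Lemma imset_phi2D1 S a : phi2 @: (S :\ a) = phi2 @: S :\ phi2 a.
Proof.
apply/setP=> x; rewrite !inE; apply/imsetP/andP=> [[b] | [xa /imsetP[b bS def_x]]].
  by rewrite !inE => /andP[ba bS] ->; rewrite (inj_eq phi2_inj) ba imset_f.
by exists b; rewrite // !inE bS andbT -(inj_eq phi2_inj) -def_x.
Qed.

Lemma gen_ts_image R : R \subset lattice_arrows ->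
  gen_ts G (phi2 @: R) = phi2 @: ts_closure R.
Proof.
move=> sRA; apply/eqP; rewrite eqEsubset; apply/andP; split.
  apply: bigcap_inf; rewrite transfer_system_image; last exact: ts_closure_spec.
  exact/imsetS/sub_ts_closure.
apply/subsetP=> _ /imsetP[a aC ->]; apply/bigcapP=> T /andP[tsT sRT].
suff : a \in phi2 @^-1: T by rewrite inE.
apply: subsetP aC; apply: ts_closure_min; first exact: lattice_ts_preimage.
by apply/subsetP=> r rR; rewrite inE (subsetP sRT) ?imset_f.
Qed.

Lemma minimal_generating_image S : independent S ->
  minimal_generating G (phi2 @: S) (phi2 @: ts_closure S).
Proof.
move=> indS; have sSA := independent_arrows indS.
apply/and4P; split; first exact/imsetS/sub_ts_closure.
- apply/forall_inP=> _ /imsetP[s sS ->]; apply: contra (independent_neq indS sS).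
  by move/eqP/phi_inj->.
- by rewrite gen_ts_image.
- apply/forall_inP=> _ /imsetP[s sS ->].
  rewrite -imset_phi2D1 gen_ts_image; last exact: subset_trans (subsetDl _ _) sSA.
  apply: contraNneq (independent_notin indS sS) => /(congr1 (fun T => phi2 s \in T)).
  by rewrite !(mem_imset _ _ phi2_inj) => ->; rewrite (subsetP (sub_ts_closure S)).
Qed.

Lemma independent_preimage T (Y : {set arrowT gT}) :
  is_transfer_system G T -> minimal_generating G Y T ->
  independent (phi2 @^-1: Y) /\ #|phi2 @^-1: Y| = #|Y|.
Proof.
case/and5P=> /forall_inP T_arr _ _ _ _ /and4P[sYT _ /eqP genY /forall_inP minY].
have def_Y : phi2 @: (phi2 @^-1: Y) = Y.
  by apply: image_preimage => x /(subsetP sYT); apply: T_arr.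
split; last by rewrite -{2}def_Y card_imset //; apply: phi2_inj.
have sYA : phi2 @^-1: Y \subset lattice_arrows.
  by apply/subsetP=> a; rewrite !inE => /(subsetP sYT)/T_arr; rewrite is_arrow_phi2.
apply/forall_inP=> s sY; move: (subsetP sYA s sY); rewrite inE => -> /=; apply/negP=> sC.
have sYdA : phi2 @^-1: Y :\ s \subset lattice_arrows := subset_trans (subsetDl _ _) sYA.
have /eqP[] : gen_ts G (Y :\ phi2 s) != T by apply: minY; rewrite inE in sY.
rewrite -def_Y -imset_phi2D1 gen_ts_image //.
by rewrite (ts_closureD1 sYdA sC) -gen_ts_image // def_Y.
Qed.

Lemma complexity_lattice : complexity G = \max_(S : {set L * L} | independent S) #|S|.
Proof.
apply/eqP; rewrite eqn_leq; apply/andP; split.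
  apply/bigmax_leqP=> T tsT; apply/bigmax_leqP=> S minS.
  have [indS <-] := independent_preimage tsT minS.
  exact: (leq_bigmax_cond (F := fun S => #|S|)).
apply/bigmax_leqP=> S indS.
have tsC := transfer_system_image (ts_closure_spec (independent_arrows indS)).
rewrite /complexity; apply: leq_trans (leq_bigmax_cond _ tsC).
rewrite -(card_imset S phi2_inj).
exact: (leq_bigmax_cond (P := minimal_generating G ^~ _) (F := fun Y => #|Y|) _
  (minimal_generating_image indS)).
Qed.

End SubgroupLattice.

(** * Independent arrows in the grid [0, n] x [0, 1] *)

Lemma card_le_inj_nat (T : finType) (A : {pred T}) (f : T -> nat) m :
  {in A &, injective f} -> {in A, forall a, f a < m} -> #|A| <= m.
Proof.
move=> injf ltfm; rewrite cardE -(size_map f) -(size_iota 0 m).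
apply: uniq_leq_size => [|x /mapP[a]]; rewrite ?mem_enum.
  by rewrite map_inj_in_uniq ?enum_uniq // => x y; rewrite !mem_enum; apply: injf.
by move=> /ltfm ltam ->; rewrite mem_iota.
Qed.

Lemma card_sep_sum (T : finType) (A : {set T}) (P : pred T) :
  #|[set a in A | P a]| = \sum_(a in A) P a.
Proof.
rewrite -sum1_card big_mkcond [RHS]big_mkcond; apply: eq_bigr => a _.
by rewrite inE; case: (a \in A); case: (P a).
Qed.

Lemma card_setU_disjoint (T : finType) (A B : {set T}) :
  (forall x, x \in A -> x \in B -> False) -> #|A :|: B| = #|A| + #|B|.
Proof.
move=> dAB; apply/eqP; rewrite (leq_card_setU A B).2 -setI_eq0.
by apply/eqP/setP=> x; rewrite !inE; apply/andP=> -[]; apply: dAB.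
Qed.

Lemma meetEord m (i j : 'I_m) : nat_of_ord (i `&` j)%O = minn i j.
Proof. by rewrite Order.TotalTheory.meetEtotal /Order.min ltEord /minn; case: ltnP. Qed.

Section Grid.
Variable n : nat.

Definition grid := ('I_n.+1 *p bool)%type.
Definition lo (i : 'I_n.+1) : grid := (i, false).
Definition hi (i : 'I_n.+1) : grid := (i, true).
Implicit Types (u v : grid) (a b : grid * grid) (C R S : {set grid * grid}).

Lemma leEgrid u v : (u <= v)%O = (u.1 <= v.1) && (u.2 <= v.2).
Proof. by rewrite leEprod leEord; case: u.2; case: v.2. Qed.

Lemma meetEgrid u v : nat_of_ord (u `&` v)%O.1 = minn u.1 v.1 /\ (u `&` v)%O.2 = u.2 && v.2.
Proof.
by rewrite meetEprod; split; first exact: meetEord.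
Qed.

Lemma grid_eq u v : u.1 = v.1 :> nat -> u.2 = v.2 -> u = v.
Proof. by case: u v => [i e] [j f] /= /val_inj -> ->. Qed.

Lemma arrow_rowsE a e f : a.1.2 = e -> a.2.2 = f -> a = ((a.1.1, e), (a.2.1, f)).
Proof. by case: a => [[i ?] [j ?]] /= -> ->. Qed.

Section ReachInBottomRow.
Variable C : {set grid * grid}.
Hypothesis tsC : lattice_ts_spec C.

Definition reach (i : 'I_n.+1) : nat := \max_(j : 'I_n.+1 | (lo i, lo j) \in C) j.

Lemma reach_ub i j : (lo i, lo j) \in C -> j <= reach i.
Proof. by move=> ij; rewrite /reach (bigD1 j) ?leq_maxl. Qed.

Lemma reach_attained i : exists2 j : 'I_n.+1, (lo i, lo j) \in C & nat_of_ord j = reach i.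
Proof.
have ii : (lo i, lo i) \in C := ts_refl tsC (lo i).
by rewrite /reach (bigmax_eq_arg i ii); case: arg_maxnP => // j ij _; exists j.
Qed.

Lemma ts_le_grid b : b \in C -> b.1.1 <= b.2.1 /\ b.1.2 <= b.2.2.
Proof. by rewrite [b]surjective_pairing => /(ts_le tsC); rewrite leEgrid => /andP. Qed.

Lemma leq_reach (i : 'I_n.+1) : i <= reach i.
Proof. exact/reach_ub/(ts_refl tsC). Qed.

Lemma reach_step (i : 'I_n.+1) b : b \in C -> i <= b.1.1 <= reach i -> b.2.1 <= reach i.
Proof.
move=> bC /andP[ib breach]; have [b12 _] := ts_le_grid bC.
have [j ij def_j] := reach_attained i.
have ib1 : (lo i, lo b.1.1) \in C.
  by apply: (ts_down tsC ij); rewrite leEgrid /= ?def_j ?ib ?breach.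
have b1b2 : (lo b.1.1, lo b.2.1) \in C.
  have lob2 : (lo b.2.1 <= b.2)%O by rewrite leEgrid /= leqnn.
  have := ts_restr tsC (u := b.1) _ lob2; rewrite -surjective_pairing => /(_ bC).
  have [min1 min2] := meetEgrid b.1 (lo b.2.1).
  congr (_ \in C); congr pair; apply: grid_eq;
    by rewrite ?min1 ?min2 /= ?andbF ?(minn_idPl b12).
exact: (reach_ub (ts_trans tsC ib1 b1b2)).
Qed.

Lemma vertical_of_rising b (i : 'I_n.+1) :
  b \in C -> ~~ b.1.2 -> b.2.2 -> i <= b.1.1 -> (lo i, hi i) \in C.
Proof.
move=> bC b1 b2 ib; have [b12 _] := ts_le_grid bC.
have hib2 : (hi i <= b.2)%O by rewrite leEgrid /= b2 (leq_trans ib b12).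
have := ts_restr tsC (u := b.1) _ hib2; rewrite -surjective_pairing => /(_ bC).
have [min1 min2] := meetEgrid b.1 (hi i).
congr (_ \in C); congr pair; apply: grid_eq;
  by rewrite ?min1 ?min2 /= ?(negPf b1) ?(minn_idPr ib).
Qed.

End ReachInBottomRow.

Lemma ts_closure_lift_top R (i j : 'I_n.+1) :
  R \subset lattice_arrows -> {in R, forall r : grid * grid, r.2.2} ->
  (lo i, lo j) \in ts_closure R -> exists e, ((i, e) : grid, hi j) \in ts_closure R.
Proof.
move=> sRA topR; have tsC := ts_closure_spec sRA; set C := ts_closure R.
(* Invariant: an arrow of C ending at column j of the bottom row comes with an
   arrow of C from its source column to hi j. *)
pose D := [set a in C | a.2.2 || [exists e, ((a.1.1, e) : grid, hi a.2.1) \in C]].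
suff /subsetP sCD : C \subset D by move=> /sCD; rewrite inE => /andP[_ /existsP].
apply: ts_closure_min; last first.
  by apply/subsetP=> r rR; rewrite inE topR ?(subsetP (sub_ts_closure R)).
split=> [u v|u|u v w|u v z]; rewrite !inE.
- by case/andP=> /(ts_le tsC).
- rewrite (ts_refl tsC) /=; apply/orP; right.
  by apply/existsP; exists true; apply: (ts_refl tsC (hi u.1)).
- case/andP=> uv Quv /andP[vw Qvw]; rewrite (ts_trans tsC uv vw) /=.
  have bot_src a : a \in C -> a.2.2 = false -> a.1.2 = false.
    by move=> aC; have [_] := ts_le_grid tsC aC; case: a.1.2; case: a.2.2.
  case w2: w.2 => //=; have /= v2 := bot_src _ vw w2.
  have /= u2 := bot_src _ uv v2.
  move: Qvw Quv; rewrite w2 v2 /= => /existsP[[] e2] /existsP[e1 e1v]; apply/existsP.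
    by exists e1; apply: (ts_trans tsC e1v e2).
  exists false; apply: (ts_trans tsC _ e2).
  by move: uv; rewrite [u]surjective_pairing [v]surjective_pairing u2 v2.
- case/andP=> uv Quv zv; rewrite (ts_restr tsC uv zv) /=.
  case z2: z.2 => //=; apply/existsP.
  move: zv; rewrite leEgrid => /andP[zv1 zv2].
  case: (leqP z.1 u.1) => [zu | uz].
    have -> : (u.1 `&` z.1)%O = z.1 by apply: ord_inj; rewrite meetEord (minn_idPr zu).
    by exists true; apply: (ts_refl tsC (hi z.1)).
  have -> : (u.1 `&` z.1)%O = u.1 by apply: ord_inj; rewrite meetEord (minn_idPl (ltnW uz)).
  case v2: v.2 in zv2 Quv.
    exists u.2; apply: (ts_down tsC (v := v)); rewrite -?surjective_pairing //.
      by rewrite leEgrid /= ltnW // leq_b1.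
    by rewrite leEgrid /= zv1 v2.
  case/existsP: Quv => e ev; exists e; apply: (ts_down tsC ev).
    by rewrite leEgrid /= ltnW // leq_b1.
  by rewrite leEgrid /= zv1.
Qed.

Section IndependentGrid.
Variable S : {set grid * grid}.
Hypothesis indS : independent S.

Definition reachD1 a : nat := reach (ts_closure (S :\ a)) a.1.1.

Lemma independent_le_grid a : a \in S -> a.1.1 <= a.2.1 /\ a.1.2 <= a.2.2.
Proof.
by move/(subsetP (independent_arrows indS)); apply: (ts_le_grid lattice_ts_arrows).
Qed.

Lemma same_source_row_eq a b : a \in S -> b \in S -> a.1 = b.1 -> a.2.2 = b.2.2 -> a = b.
Proof.
move=> aS bS ab1 ab2; case: (eqVneq a b) => // neq; exfalso.
wlog le_ab : a b aS bS ab1 ab2 neq / a.2.1 <= b.2.1.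
  move=> hwlog; case: (leqP a.2.1 b.2.1) => [|/ltnW]; first exact: hwlog.
  by apply: hwlog; rewrite // eq_sym.
have /negP[] := independent_same_source indS aS bS neq ab1.
by rewrite leEgrid le_ab ab2 leqnn.
Qed.

Lemma flat_lt a : a \in S -> a.1.2 = a.2.2 -> a.1.1 < a.2.1.
Proof.
move=> aS a12; have [le_a _] := independent_le_grid aS; rewrite ltn_neqAle le_a andbT.
by apply: contra (independent_neq indS aS) => /eqP a11; apply/eqP/grid_eq.
Qed.

Lemma reachD1_lt_bottom a : a \in S -> ~~ a.2.2 -> reachD1 a < a.2.1.
Proof.
move=> aS a2; have [_ a12] := independent_le_grid aS.
have a1 : a.1.2 = false by move: a12 a2; case: a.1.2; case: a.2.2.
have tsC := ts_closureD1_spec indS a.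
have [j a1j def_j] := reach_attained tsC a.1.1.
rewrite /reachD1 ltnNge -def_j; apply: contraNN (independent_notin indS aS) => a2j.
rewrite {1}(@arrow_rowsE a false false) ?a1 ?(negbTE a2) //.
by apply: (ts_down tsC a1j); rewrite leEgrid /= ?a2j ?(independent_le_grid aS).1.
Qed.

Lemma reachD1_clash a b : a \in S -> b \in S -> a != b ->
  a.1.1 <= b.1.1 <= reachD1 a -> b.2.1 <= reachD1 a.
Proof.
move=> aS bS neq; apply: (reach_step (ts_closureD1_spec indS a)).
by apply: mem_ts_closureD1; rewrite // eq_sym.
Qed.

Lemma card_le_width (F : {set grid * grid}) (P : pred (grid * grid)) :
  F \subset S ->
  {in F, forall a, (if P a then nat_of_ord a.1.1 else reachD1 a) < a.2.1} ->
  {in F &, forall a b, P a -> P b -> a.1.1 = b.1.1 :> nat -> a = b} ->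
  #|F| <= n.
Proof.
(* Two distinct arrows with the same label f contradict reachD1_clash. *)
move=> sFS lt_f injP; pose f a := if P a then nat_of_ord a.1.1 else reachD1 a.
have {}lt_f : {in F, forall a, f a < a.2.1} := lt_f.
have le_f a : a.1.1 <= f a.
  by rewrite /f; case: (P a) => //; apply/leq_reach/ts_closureD1_spec.
apply: (card_le_inj_nat (f := f)) => [a b aF bF fab|a /lt_f]; last first.
  by move/leq_trans; apply; rewrite -ltnS.
case: (eqVneq a b) => // neq; exfalso.
wlog le_ab : a b aF bF fab neq / a.1.1 <= b.1.1.
  move=> hwlog; case: (leqP a.1.1 b.1.1) => [|/ltnW]; first exact: hwlog.
  by apply: hwlog; rewrite // eq_sym.
have [aS bS] := (subsetP sFS a aF, subsetP sFS b bF).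
case Pa: (P a); last first.
  have := reachD1_clash aS bS neq; rewrite /f Pa in fab.
  by rewrite fab le_ab le_f leqNgt lt_f // => /implyP.
have fa : f a = a.1.1 by rewrite /f Pa.
case Pb: (P b).
  by case/eqP: neq; apply: injP; rewrite // -fa fab /f Pb.
have := reachD1_clash bS aS; rewrite eq_sym => /(_ neq).
have fb : f b = reachD1 b by rewrite /f Pb.
have r_eq : reachD1 b = a.1.1 by rewrite -fb -fab fa.
rewrite r_eq leqnn andbT -{1}r_eq -fb le_f => /(_ isT).
by rewrite leqNgt -fa lt_f.
Qed.

Definition rising a : bool := ~~ a.1.2 && a.2.2.

Definition rise_max : nat := \max_(a | (a \in S) && rising a) a.1.1.

Definition max_rising : {set grid * grid} :=
  [set a in S | rising a && (a.1.1 == rise_max :> nat)].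

Lemma leq_rise_max a : a \in S -> rising a -> a.1.1 <= rise_max.
Proof. by move=> aS ra; rewrite /rise_max (bigD1 a) ?aS ?ra ?leq_maxl. Qed.

Lemma vertical_below_rise_max a : a \in S -> rising a -> a.1.1 < rise_max ->
  (lo a.1.1, hi a.1.1) \in ts_closure (S :\ a).
Proof.
move=> aS ra lt_aM; have Pa : (a \in S) && rising a by rewrite aS.
move: lt_aM; rewrite /rise_max (bigmax_eq_arg a Pa).
case: arg_maxnP => // b /andP[bS /andP[b1 b2]] _ lt_ab.
apply: (vertical_of_rising (ts_closureD1_spec indS a) _ b1 b2 (ltnW lt_ab)).
by apply: mem_ts_closureD1; rewrite // (contraTneq _ lt_ab) // => ->; rewrite ltnn.
Qed.

Lemma rising_lt a : a \in S -> rising a -> a.1.1 < rise_max -> a.1.1 < a.2.1.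
Proof.
move=> aS ra lt_aM; have [le_a _] := independent_le_grid aS; rewrite ltn_neqAle le_a andbT.
apply: contraNneq (independent_notin indS aS) => a12.
case/andP: ra => a1 a2; rewrite {1}(@arrow_rowsE a false true) ?(negbTE a1) //.
by rewrite -(ord_inj a12) vertical_below_rise_max // /rising a1.
Qed.

Lemma card_max_rising : #|max_rising| <= 1.
Proof.
apply/card_le1_eqP=> a b; rewrite !inE => /and3P[aS /andP[a1 a2] /eqP aM].
case/and3P=> bS /andP[b1 b2] /eqP bM; apply: same_source_row_eq => //.
  by apply: grid_eq; rewrite ?aM ?bM // (negbTE a1) (negbTE b1).
by rewrite a2 b2.
Qed.

Lemma card_flat : #|[set a in S | a.1.2 == a.2.2]| <= n.
Proof.
apply: (card_le_width (P := fun a => a.1.2)).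
- by apply/subsetP=> a; rewrite inE => /andP[].
- move=> a; rewrite inE => /andP[aS /eqP a12]; case: ifP => a1.
    exact: flat_lt.
  by apply: reachD1_lt_bottom; rewrite // -a12 a1.
- move=> a b; rewrite !inE => /andP[aS /eqP a12] /andP[bS /eqP b12] a1 b1 ab.
  apply: same_source_row_eq; rewrite // -?a12 -?b12 ?a1 ?b1 //.
  by apply: grid_eq; rewrite ?a1.
Qed.

Lemma ltn_rise_max a : a \in S -> rising a -> a \notin max_rising -> a.1.1 < rise_max.
Proof.
by move=> aS ra; rewrite inE aS ra ltn_neqAle leq_rise_max // andbT.
Qed.

Lemma card_bottom_source : #|[set a in S | ~~ a.1.2]| <= n.+1.
Proof.
rewrite -(cardsID max_rising); apply: (@leq_add _ _ 1 n).
  exact: leq_trans (subset_leq_card (subsetIr _ _)) card_max_rising.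
apply: (card_le_width (P := fun a => a.2.2)).
- by apply/subsetP=> a /setDP[]; rewrite inE => /andP[].
- move=> a /setDP[]; rewrite inE => /andP[aS a1] na; case: ifP => a2.
    have ra : rising a by rewrite /rising a1.
    exact/rising_lt/ltn_rise_max.
  by apply: reachD1_lt_bottom; rewrite ?a2.
- move=> a b /setDP[+ _] /setDP[+ _]; rewrite !inE => /andP[aS a1] /andP[bS b1] a2 b2 ab.
  apply: same_source_row_eq; rewrite ?a2 ?b2 //.
  by apply: grid_eq; rewrite ?(negbTE a1) ?(negbTE b1).
Qed.

Section TopTargets.
Hypothesis allTop : {in S, forall a : grid * grid, a.2.2}.

Lemma reachD1_lt_rising a : a \in S -> rising a -> a.1.1 < rise_max -> reachD1 a < a.2.1.
Proof.
move=> aS ra lt_aM; have tsC := ts_closureD1_spec indS a; case/andP: (ra) => a1 a2.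
have vert := vertical_below_rise_max aS ra lt_aM.
have [j a1j def_j] := reach_attained tsC a.1.1.
have top_j : (lo a.1.1, hi j) \in ts_closure (S :\ a).
  have sSdA : S :\ a \subset lattice_arrows.
    exact: subset_trans (subsetDl _ _) (independent_arrows indS).
  have topSd : {in S :\ a, forall r : grid * grid, r.2.2}.
    by move=> r; rewrite inE => /andP[_ /allTop].
  case: (ts_closure_lift_top sSdA topSd a1j) => -[] // ej.
  exact: (ts_trans tsC vert ej).
rewrite /reachD1 -def_j ltnNge; apply: contraNN (independent_notin indS aS) => a2j.
rewrite {1}(@arrow_rowsE a false true) ?(negbTE a1) //.
by apply: (ts_down tsC top_j); rewrite leEgrid /= ?a2j ?(independent_le_grid aS).1.
Qed.

Lemma card_all_top : #|S| <= n.+1.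
Proof.
rewrite -(cardsID max_rising); apply: (@leq_add _ _ 1 n).
  exact: leq_trans (subset_leq_card (subsetIr _ _)) card_max_rising.
apply: (card_le_width (P := fun a => a.1.2)); first exact: subsetDl.
- move=> a /setDP[aS na]; case: ifP => a1.
    by apply: flat_lt; rewrite ?a1 ?allTop.
  have ra : rising a by rewrite /rising a1 allTop.
  exact/reachD1_lt_rising/ltn_rise_max.
- move=> a b /setDP[aS _] /setDP[bS _] a1 b1 ab.
  by apply: same_source_row_eq; rewrite ?allTop //; apply: grid_eq; rewrite ?a1 ?b1.
Qed.

End TopTargets.

End IndependentGrid.

Lemma card_top_target S : independent S -> #|[set a in S | a.2.2]| <= n.+1.
Proof.
move=> indS; apply: card_all_top; last by move=> a; rewrite inE => /andP[].
by apply: independentS indS; apply/subsetP=> a; rewrite inE => /andP[].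
Qed.

Lemma independent_card_grid S : independent S -> (#|S|).*2 <= 3 * n + 2.
Proof.
move=> indS; have := card_flat indS; have := card_bottom_source indS.
have := card_top_target indS.
(* Each arrow lies in exactly two of the three sets. *)
suff -> : (#|S|).*2 = #|[set a in S | a.1.2 == a.2.2]| + #|[set a in S | a.2.2]|
                      + #|[set a in S | ~~ a.1.2]| by lia.
rewrite !card_sep_sum -!big_split -muln2 -sum_nat_const; apply: eq_bigr => a aS.
by have [_] := independent_le_grid indS aS; case: a.1.2; case: a.2.2.
Qed.

(** * An independent family of maximal size *)

Definition jump_free (lb g : nat) (t : bool) : {set grid * grid} :=
  [set a : grid * grid |
    (a.1 <= a.2)%O && ~~ [&& t ==> a.1.2, lb <= a.1.1, a.1.1 <= g & g < a.2.1]].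

Definition rise_free (lb hb : nat) : {set grid * grid} :=
  [set a : grid * grid | [&& (a.1 <= a.2)%O,
    ~~ [&& ~~ a.1.2, a.2.2, lb <= a.1.1 & hb <= a.2.1] &
    (lb < hb) ==> ~~ [&& a.1.2, a.1.1 < hb & hb <= a.2.1]]].

Lemma lattice_ts_jump_free lb g t : lattice_ts_spec (jump_free lb g t).
Proof.
split=> [u v|u|[u1 e1] [v1 e2] [w1 e3]|[u1 e1] [v1 e2] [z1 e3]]; rewrite !inE ?leEgrid.
- by case/andP.
- by rewrite /= !leqnn /=; lia.
- by case: e1; case: e2; case: e3; case: t => /=; lia.
- have [-> ->] := meetEgrid (u1, e1) (z1, e3).
  by case: e1; case: e2; case: e3; case: t => /=; lia.
Qed.

Lemma lattice_ts_rise_free lb hb : lattice_ts_spec (rise_free lb hb).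
Proof.
split=> [u v|u|[u1 e1] [v1 e2] [w1 e3]|[u1 e1] [v1 e2] [z1 e3]]; rewrite !inE ?leEgrid.
- by case/andP.
- by rewrite /= !leqnn /=; lia.
- by case: e1; case: e2; case: e3 => /=; lia.
- have [-> ->] := meetEgrid (u1, e1) (z1, e3).
  by case: e1; case: e2; case: e3 => /=; lia.
Qed.

Section LowerBound.
Variables (k : nat) (o : bool).
Hypothesis def_n : n = k.*2 + o.

Definition top_step (i : nat) : grid * grid := (hi (inord i), hi (inord i.+1)).
Definition bottom_span (i : nat) : grid * grid := (lo (inord i), lo (inord (k.*2.+1 - i))).
Definition rise_span (i : nat) : grid * grid := (lo (inord i), hi (inord (k.*2 - i))).

Definition lower_family : {set grid * grid} :=
  [set top_step i | i : 'I_k] :|: [set bottom_span i.+1 | i : 'I_k] :|: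
  [set rise_span i | i : 'I_k.+1] :|: (if o then [set top_step k.*2] else set0).

Lemma lower_familyP a : a \in lower_family ->
  [\/ exists2 i, i < k & a = top_step i, exists2 i, 0 < i <= k & a = bottom_span i,
      exists2 i, i <= k & a = rise_span i | o /\ a = top_step k.*2].
Proof.
rewrite !inE -!orbA => /or4P[/imsetP[i _ ->]|/imsetP[i _ ->]|/imsetP[i _ ->]|].
- by apply: Or41; exists i.
- by apply: Or42; exists i.+1; rewrite //= ltn_ord.
- by apply: Or43; exists i; rewrite // -ltnS.
- by case: o; rewrite ?inE // => /eqP ->; apply: Or44.
Qed.

Lemma independent_lower_family : independent lower_family.
Proof.
apply: independent_separated.
  move=> a /lower_familyP[[i ? ->]|[i ? ->]|[i ? ->]|[? ->]];
    rewrite leEgrid /= !inordK; lia.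
move=> s /lower_familyP[[i lt_i ->]|[i lt_i ->]|[i lt_i ->]|[o_ ->]].
- exists (jump_free 0 i true); first exact: lattice_ts_jump_free.
  apply/andP; split; last by rewrite inE leEgrid /= !inordK; lia.
  apply/subsetP=> t /setD1P[ts /lower_familyP[[j ? def_t]|[j ? def_t]|[j ? def_t]|[? def_t]]];
    rewrite def_t inE leEgrid /= !inordK; try lia.
  have : j != i by apply: contraNneq ts => ij; rewrite def_t ij.
  lia.
- exists (jump_free i (k.*2 - i) false); first exact: lattice_ts_jump_free.
  apply/andP; split; last by rewrite inE leEgrid /= !inordK; lia.
  apply/subsetP=> t /setD1P[ts /lower_familyP[[j ? def_t]|[j ? def_t]|[j ? def_t]|[? def_t]]];
    rewrite def_t inE leEgrid /= !inordK; try lia.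
  have : j != i by apply: contraNneq ts => ij; rewrite def_t ij.
  lia.
- exists (rise_free i (k.*2 - i)); first exact: lattice_ts_rise_free.
  apply/andP; split; last by rewrite inE leEgrid /= !inordK; lia.
  apply/subsetP=> t /setD1P[ts /lower_familyP[[j ? def_t]|[j ? def_t]|[j ? def_t]|[? def_t]]];
    rewrite def_t inE leEgrid /= !inordK; try lia.
  have : j != i by apply: contraNneq ts => ij; rewrite def_t ij.
  lia.
- exists (jump_free 0 k.*2 true); first exact: lattice_ts_jump_free.
  apply/andP; split; last by rewrite inE leEgrid /= !inordK; lia.
  apply/subsetP=> t /setD1P[ts /lower_familyP[[j ? def_t]|[j ? def_t]|[j ? def_t]|[? def_t]]];
    rewrite def_t inE leEgrid /= !inordK; try lia.
  by rewrite def_t eqxx in ts.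
Qed.

Lemma card_lower_family : #|lower_family| = 3 * k + 1 + o.
Proof.
have col_inj m d (g : 'I_m -> grid * grid) :
    (forall t, nat_of_ord (g t).1.1 = t + d) -> injective g.
  move=> gE s t /(congr1 (fun a : grid * grid => nat_of_ord a.1.1)).
  by rewrite !gE => /addIn /ord_inj.
rewrite /lower_family !card_setU_disjoint => [|a|a|a].
- rewrite !card_imset ?card_ord; first by case: o def_n; rewrite ?cards1 ?cards0; lia.
  - by apply: (col_inj _ 0) => t; rewrite /= inordK ?addn0 //; have := ltn_ord t; lia.
  - by apply: (col_inj _ 1) => t; rewrite /= inordK ?addn1 //; have := ltn_ord t; lia.
  - by apply: (col_inj _ 0) => t; rewrite /= inordK ?addn0 //; have := ltn_ord t; lia.
- by move=> /imsetP[i _ ->] /imsetP[j _].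
- by case/setUP=> /imsetP[i _ ->] /imsetP[j _].
case: o def_n => dn; last by move=> _; rewrite /= in_set0.
move=> /[swap] /set1P->; case/setUP=> [/setUP[]|] /imsetP[i _] //.
have := ltn_ord i; rewrite /top_step => lt_i -[] /(congr1 val); rewrite /= !inordK; lia.
Qed.

End LowerBound.

Lemma max_independent_grid k (o : bool) : n = k.*2 + o ->
  \max_(S : {set grid * grid} | independent S) #|S| = 3 * k + 1 + o.
Proof.
move=> def_n; apply/eqP; rewrite eqn_leq; apply/andP; split.
  by apply/bigmax_leqP=> S /independent_card_grid; case: o def_n; lia.
rewrite -(card_lower_family def_n).
exact: (leq_bigmax_cond (P := fun S : {set grid * grid} => independent S)
  (F := fun S => #|S|) _ (independent_lower_family def_n)).
Qed.

End Grid.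

(** * Cyclic groups of order p^n q *)

Section PrimeFactors.
Variables p q : nat.
Hypotheses (p_pr : prime p) (q_pr : prime q) (p_neq_q : p != q).

Lemma dvdn_pq_pow a (e : bool) b (f : bool) :
  (p ^ a * q ^ e %| p ^ b * q ^ f) = (a <= b) && (e <= f).
Proof.
have [p_gt0 q_gt0] := (prime_gt0 p_pr, prime_gt0 q_pr).
have lognq m : logn p (q ^ m) = 0 by rewrite lognX logn_prime // (negPf p_neq_q) muln0.
apply/idP/andP=> [dv | [le_ab le_ef]]; last by apply: dvdn_mul; rewrite dvdn_exp2l.
split.
  have pos : 0 < p ^ b * q ^ f by rewrite muln_gt0 !expn_gt0 p_gt0 q_gt0.
  have := dvdn_leq_log p pos dv.
  by rewrite !lognM ?expn_gt0 ?p_gt0 ?q_gt0 // !pfactorK // !lognq !addn0.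
case: e f dv => [] [] //=; rewrite ?expn1 ?expn0 ?muln1 => dv.
have := dvdn_trans (dvdn_mull _ (dvdnn q)) dv.
by rewrite Euclid_dvdX // dvdn_prime2 // eq_sym (negPf p_neq_q).
Qed.

Lemma dvdn_pow_mul_prime d m : d %| p ^ m * q ->
  exists2 a, a <= m & d = p ^ a * q ^ (q %| d).
Proof.
case q_d: (q %| d) => dv.
  case/dvdnP: q_d dv => d' ->; rewrite dvdn_pmul2r ?prime_gt0 //.
  by case/(dvdn_pfactor _ _ p_pr)=> a le_am ->; exists a; rewrite ?expn1.
have cop_dq : coprime d q by rewrite coprime_sym prime_coprime // q_d.
move: dv; rewrite Gauss_dvdl // => /(dvdn_pfactor _ _ p_pr)[a le_am ->].
by exists a; rewrite // expn0 muln1.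
Qed.

End PrimeFactors.

Section CyclicSubgroups.
Local Open Scope group_scope.
Variables (gT : finGroupType) (x : gT) (p q n : nat).
Hypotheses (p_pr : prime p) (q_pr : prime q) (p_neq_q : p != q).
Hypothesis ox : #[x] = (p ^ n * q)%N.

Definition grid_order (u : grid n) : nat := p ^ u.1 * q ^ u.2.

Definition grid_subgroup (u : grid n) : {set gT} := <[x ^+ (#[x] %/ grid_order u)]>.

Lemma grid_order_dvdn u : grid_order u %| #[x].
Proof.
rewrite /grid_order ox -[q in (_ * q)%N]expn1 (dvdn_pq_pow p_pr q_pr p_neq_q _ _ _ true).
by rewrite -ltnS ltn_ord; case: u.2.
Qed.

Lemma card_grid_subgroup u : #|grid_subgroup u| = grid_order u.
Proof.
have [k def_x] := dvdnP (grid_order_dvdn u).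
have ord_gt0 : 0 < grid_order u by rewrite muln_gt0 !expn_gt0 !prime_gt0.
rewrite -orderE orderXdiv ?dvdn_div ?grid_order_dvdn // def_x mulnK //.
by rewrite mulKn //; move: (order_gt0 x); rewrite def_x muln_gt0 => /andP[].
Qed.

Lemma grid_subgroup_sub u : grid_subgroup u \subset <[x]>.
Proof. exact: cycleX. Qed.

Lemma grid_subgroup_leE u v : (grid_subgroup u \subset grid_subgroup v) = (u <= v)%O.
Proof.
rewrite -(cardSg_cyclic (cycle_cyclic x)) ?grid_subgroup_sub // !card_grid_subgroup.
by rewrite (dvdn_pq_pow p_pr q_pr p_neq_q) leEgrid.
Qed.

Lemma grid_subgroup_onto H : is_subgroup <[x]> H -> exists u, H = grid_subgroup u.
Proof.
case/andP=> gH sHx; pose K := Group gH.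
have : #|K| %| p ^ n * q by rewrite -ox orderE cardSg.
case/(dvdn_pow_mul_prime p_pr q_pr) => a le_an def_K.
exists (Ordinal (le_an : a < n.+1), q %| #|H|); apply/eqP.
rewrite -[H]/(gval K) (eq_subG_cyclic (cycle_cyclic x)) ?grid_subgroup_sub //.
by rewrite card_grid_subgroup /grid_order /= -def_K.
Qed.

Lemma complexity_cycle :
  complexity <[x]> = \max_(S : {set grid n * grid n} | independent S) #|S|.
Proof.
apply: (complexity_lattice (phi := grid_subgroup) (cycle_abelian x)).
- by move=> u; apply: groupP.
- exact: grid_subgroup_sub.
- exact: grid_subgroup_leE.
- exact: grid_subgroup_onto.
Qed.

End CyclicSubgroups.

Theorem corollary6p6 (gT : finGroupType) (G : {group gT}) (p q n : nat) :
  prime p -> prime q -> p != q -> 1 <= n ->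
  cyclic G -> #|G| = p ^ n * q ->
  (forall k, n = k.*2 -> complexity G = 3 * k + 1) /\
  (forall k, n = k.*2.+1 -> complexity G = 3 * k + 2).
Proof.
move=> p_pr q_pr p_neq_q _ /cyclicP[x defG] oG.
have ox : #[x]%g = p ^ n * q by rewrite orderE -defG oG.
have complexityE k (o : bool) : n = k.*2 + o -> complexity G = 3 * k + 1 + o.
  move=> def_n; rewrite defG (complexity_cycle p_pr q_pr p_neq_q ox).
  exact: max_independent_grid.
split=> k def_n.
  by rewrite (complexityE k false) ?addn0 // def_n addn0.
by rewrite (complexityE k true) -?addnA // def_n addn1.
Qed.
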